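(* Let $S\ge 3$ and let $n_1,\dots,n_S$ be nonnegative integers. Write $E=E(n_1,\dots,n_S)$ and let $E(n_j\pm1)$ denote $E(n_1,\dots,n_S)$ with only the $j$-th argument replaced by $n_j\pm1$ (a value with a negative argument is $0$). Then $$2(n_2-n_1)E=(n_1+1)E(n_1+1)+n_1E(n_1-1)-(n_2+1)E(n_2+1)-n_2E(n_2-1),$$ $$(n_1+1)E(n_1+1)=n_2E(n_2-1)+\dots+n_SE(n_S-1)+(n_2+\dots+n_S-n_1)E.$$
   Context: For nonnegative integers $n_1,\dots,n_S$, $E(n_1,\dots,n_S)$ denotes the number of block derangements: $S$ players hold $n_1,\dots,n_S$ distinct cards respectively; all $N=n_1+\dots+n_S$ cards are redealt so that player $j$ again receives exactly $n_j$ cards (only which cards each player gets matters); $E$ counts the deals in which no player receives any card he originally held. Equivalently, $E(n_1,\dots,n_S)$ is the coefficient of $x_1^{n_1}\cdots x_S^{n_S}$ in $\prod_{j=1}^S(x_1+\dots+x_S-x_j)^{n_j}$. By convention $E(0,\dots,0)=1$. *)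

From HB Require Import structures.
From mathcomp Require Import all_boot all_order all_algebra.
Set Implicit Arguments. Unset Strict Implicit. Unset Printing Implicit Defensive.

(* Cards: player j originally holds the cards (j, k) with k : 'I_(n j).
   A deal is a map f from cards to players; player j must receive exactly
   n j cards, and no card may go back to its original holder (tag c). *)
Definition card_t (S : nat) (n : 'I_S -> nat) : finType :=
  {j : 'I_S & 'I_(n j)}.

Definition E (S : nat) (n : 'I_S -> nat) : nat :=
  #|[pred f : {ffun card_t n -> 'I_S} |
      [forall c : card_t n, f c != tag c] &&
      [forall j : 'I_S, #|[pred c : card_t n | f c == j]| == n j]]|.

Definition upd (S : nat) (n : 'I_S -> nat) (j : 'I_S) (m : nat) : 'I_S -> nat :=
  fun i => if i == j then m else n i.

Definition Einc (S : nat) (n : 'I_S -> nat) (j : 'I_S) : nat :=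
  E (upd n j (n j).+1).

Definition Edec (S : nat) (n : 'I_S -> nat) (j : 'I_S) : nat :=
  if n j is m.+1 then E (upd n j m) else 0.

(* Fix a player a and write E' = E(n_a + 1).  The heart of the file is the
   recurrence, valid for every S and every a,
     (n_a + 1) E' + n_a E = sum_(j <> a) n_j E + sum_(j <> a) n_j E(n_j - 1),
   proved by double counting.  To do so we generalise block derangements to
   "partial deals": only the cards of a set A are redealt (none to its owner,
   player j receiving m_j of them) while the other cards stay put.  Their
   number pdeals A m satisfies two basic counting rules: fixing the receiver
   k of one card c of A leaves the partial deals of A \ {c} with player k
   short of one card, and summing over c in A the deals in which player j
   receives c gives m_j * pdeals A m.  Relabelling the cards bijectively
   (owners preserved) does not change pdeals, which lets us view all the
   relevant deals as partial deals of the single card set of E'.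
   The second identity of the theorem is the recurrence at a = p1, and the
   first is the difference of the recurrences at p1 and p2 (neither needs
   S >= 3 nor the particular positions of p1 and p2). *)

From HB Require Import structures.
From mathcomp Require Import all_boot all_order all_algebra perm ring.
Set Implicit Arguments. Unset Strict Implicit. Unset Printing Implicit Defensive.
Import GRing.Theory.

Lemma card_predI_sum (T : finType) (P Q : pred T) :
  #|[pred x | P x && Q x]| = \sum_(x | P x) (Q x : nat).
Proof.
rewrite -sum1_card (eq_bigl (fun x => P x && Q x)) //.
by rewrite big_mkcondr /=; apply: eq_bigr => x _; case: (Q x).
Qed.

Section PartialDeals.
Variables (S : nat) (C : finType) (owner : C -> 'I_S).

Definition is_pdeal (A : {set C}) (m : 'I_S -> nat) (f : {ffun C -> 'I_S}) :=
  [forall c, if c \in A then f c != owner c else f c == owner c] &&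
  [forall j, #|[pred x in A | f x == j]| == m j].

Definition pdeals (A : {set C}) (m : 'I_S -> nat) : nat :=
  #|[pred f | is_pdeal A m f]|.

Lemma pdeals_ext A m m' : m =1 m' -> pdeals A m = pdeals A m'.
Proof.
move=> e; apply: eq_card => f; rewrite !inE /is_pdeal; congr (_ && _).
by apply: eq_forallb => j; rewrite e.
Qed.

Lemma count_setD1 (A : {set C}) (F : C -> 'I_S) c j : c \in A ->
  #|[pred x in A | F x == j]| = (F c == j) + #|[pred x in A :\ c | F x == j]|.
Proof.
move=> cA; rewrite (cardD1 c) inE /= cA /=; congr (_ + _).
by apply: eq_card => x; rewrite !inE /= andbA.
Qed.

Lemma count_eq_in (A : {set C}) (F F' : C -> 'I_S) j : {in A, F =1 F'} ->
  #|[pred x in A | F x == j]| = #|[pred x in A | F' x == j]|.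
Proof.
move=> e; apply: eq_card => x; rewrite !inE /=.
by case xA: (x \in A) => //=; rewrite e.
Qed.

(* Sending c to a legal receiver k: the partial deals of A with f c = k are
   in bijection with those of A \ {c} where k receives one card fewer, via
   resetting f c to the owner of c (inverse: setting it back to k). *)
Lemma pdeals_fix_legal (A : {set C}) m c k :
    c \in A -> k != owner c -> (0 < m k)%N ->
  #|[pred f | is_pdeal A m f && (f c == k)]| =
  pdeals (A :\ c) (upd m k (m k).-1).
Proof.
move=> cA kno mkp.
pose send (g : {ffun C -> 'I_S}) := [ffun x => if x == c then k else g x].
pose D := [set g | is_pdeal (A :\ c) (upd m k (m k).-1) g].
have -> : pdeals (A :\ c) (upd m k (m k).-1) = #|D|.
  by apply: eq_card => g; rewrite /D inE.
have send_inj : {in D &, injective send}.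
  move=> g1 g2; rewrite !inE => /andP[/forallP o1 _] /andP[/forallP o2 _] e.
  apply/ffunP => x; have := congr1 (fun f : {ffun C -> 'I_S} => f x) e.
  rewrite /send !ffunE; case: (eqVneq x c) => [->|//] _.
  by have := o1 c; have := o2 c; rewrite !inE eqxx /= => /eqP -> /eqP ->.
rewrite -(card_in_imset send_inj); apply: eq_card => f; rewrite !inE.
apply/idP/imsetP.
  case/andP=> /andP[/forallP ok1 /forallP ok2] /eqP fck.
  exists [ffun x => if x == c then owner c else f x].
    rewrite inE /is_pdeal; apply/andP; split.
      apply/forallP => x; rewrite ffunE !inE.
      by case: (eqVneq x c) => [->|xc]; [rewrite eqxx | have := ok1 x].
    apply/forallP => j.
    rewrite (count_eq_in (F' := f)); last by move=> x; rewrite !inE ffunE; case: eqP.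
    rewrite /upd; case: (eqVneq j k) => [->|jk].
      by rewrite -(eqP (ok2 k)) (count_setD1 f k cA) fck eqxx.
    by rewrite -(eqP (ok2 j)) (count_setD1 f j cA) fck [k == j]eq_sym (negbTE jk).
  by apply/ffunP => x; rewrite !ffunE; case: (eqVneq x c) => [->|].
case=> g; rewrite inE => /andP[/forallP ok1 /forallP ok2] ->.
apply/andP; split; last by rewrite /send ffunE eqxx.
apply/andP; split.
  apply/forallP => x; rewrite ffunE.
  case: (eqVneq x c) => [->|xc]; first by rewrite cA.
  by have := ok1 x; rewrite !inE xc.
apply/forallP => j; rewrite (count_setD1 _ _ cA) ffunE eqxx.
rewrite (count_eq_in (F' := g)); last by move=> x; rewrite !inE ffunE; case: eqP.
rewrite (eqP (ok2 j)) /upd; case: (eqVneq j k) => [->|jk].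
  by rewrite add1n prednK.
by rewrite add0n.
Qed.

Lemma pdeals_fix (A : {set C}) m c k : c \in A ->
  #|[pred f | is_pdeal A m f && (f c == k)]| =
  if (k != owner c) && (0 < m k)%N then pdeals (A :\ c) (upd m k (m k).-1)
  else 0.
Proof.
move=> cA; case: (eqVneq k (owner c)) => [ko|kno] /=.
  apply: eq_card0 => f; rewrite !inE /is_pdeal.
  apply/negP => /andP[/andP[/forallP/(_ c) + _] /eqP fck].
  by rewrite cA fck ko eqxx.
case: (posnP (m k)) => [mk0|mkp] /=; last exact: pdeals_fix_legal.
apply: eq_card0 => f; rewrite !inE /is_pdeal.
case fck: (f c == k); rewrite ?andbF //= andbT.
by apply/negP => /andP[_ /forallP /(_ k)]; rewrite mk0 (count_setD1 _ _ cA) fck.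
Qed.

Lemma pdeals_by_receiver (A : {set C}) m c : c \in A ->
  pdeals A m = \sum_(k | k != owner c)
                 (if (0 < m k)%N then pdeals (A :\ c) (upd m k (m k).-1) else 0).
Proof.
move=> cA; rewrite [RHS]big_mkcond {1}/pdeals -sum1_card.
rewrite (partition_big (fun f : {ffun C -> 'I_S} => f c) predT) //=.
apply: eq_bigr => k _; rewrite sum1_card.
rewrite (eq_card (B := [pred f | is_pdeal A m f && (f c == k)])); last first.
  by move=> f; rewrite !inE.
by rewrite pdeals_fix //; case: (k != owner c).
Qed.

(* Double counting the pairs (deal, card of A received by j). *)
Lemma sum_received (A : {set C}) m j :
  \sum_(c in A) #|[pred f | is_pdeal A m f && (f c == j)]| = m j * pdeals A m.
Proof.
under eq_bigr do rewrite card_predI_sum.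
rewrite exchange_big /= mulnC -sum_nat_const.
apply: eq_big => // f /andP[_ /forallP /(_ j) /eqP <-].
by rewrite card_predI_sum.
Qed.

End PartialDeals.

Section Relabel.
Variables (S : nat) (C' C : finType) (owner' : C' -> 'I_S) (owner : C -> 'I_S).
Variables (h : C' -> C) (h_inj : injective h).
Hypothesis h_owner : forall x, owner (h x) = owner' x.

Lemma count_imset (A' : {set C'}) (F : C -> 'I_S) j :
  #|[pred y in h @: A' | F y == j]| = #|[pred x in A' | F (h x) == j]|.
Proof.
rewrite -(card_imset [pred x in A' | F (h x) == j] h_inj).
apply: eq_card => y; rewrite !inE /=; apply/andP/imsetP.
  by case=> /imsetP[x xA ->] Fj; exists x => //; rewrite inE /= xA.
by case=> x; rewrite inE => /andP[xA Fj] ->; rewrite imset_f.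
Qed.

(* Relabelling the cards by an owner-preserving injection h does not change
   the number of partial deals: a deal F of h(A') corresponds to the deal of
   A' that sends x to F (h x). *)
Lemma pdeals_relabel (A' : {set C'}) m :
  pdeals owner' A' m = pdeals owner (h @: A') m.
Proof.
pose pull (F : {ffun C -> 'I_S}) : {ffun C' -> 'I_S} :=
  [ffun x => if x \in A' then F (h x) else owner' x].
pose D := [set F | is_pdeal owner (h @: A') m F].
have -> : pdeals owner (h @: A') m = #|D| by apply: eq_card => F; rewrite /D inE.
have pull_inj : {in D &, injective pull}.
  move=> F1 F2; rewrite !inE => /andP[/forallP o1 _] /andP[/forallP o2 _] e.
  apply/ffunP => y; case: (boolP (y \in h @: A')) => [/imsetP[x xA ->]|yA].
    by have := congr1 (fun f : {ffun C' -> 'I_S} => f x) e; rewrite !ffunE xA.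
  by have := o1 y; have := o2 y; rewrite (negbTE yA) => /eqP -> /eqP ->.
have hA x : (h x \in h @: A') = (x \in A').
  by apply/imsetP/idP => [[y yA /h_inj ->] //|xA]; exists x.
rewrite -(card_in_imset pull_inj); apply: eq_card => f; rewrite !inE.
apply/idP/imsetP.
  case/andP=> /forallP ok1 /forallP ok2.
  pose F := [ffun y => if [pick x in A' | h x == y] is Some x then f x
                       else owner y].
  have FhE x : x \in A' -> F (h x) = f x.
    move=> xA; rewrite ffunE; case: pickP => [x' /andP[_ /eqP /h_inj -> //]|].
    by move/(_ x); rewrite xA eqxx.
  exists F; last first.
    apply/ffunP => x; rewrite ffunE; case xA: (x \in A'); first by rewrite FhE.
    by have := ok1 x; rewrite xA => /eqP.
  rewrite inE /is_pdeal; apply/andP; split.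
    apply/forallP => y; case: (boolP (y \in h @: A')) => [/imsetP[x xA ->]|yA].
      by rewrite FhE // h_owner; have := ok1 x; rewrite xA.
    rewrite ffunE; case: pickP => [x /andP[xA /eqP hy]|_ //].
    by rewrite -hy imset_f in yA.
  apply/forallP => j; rewrite count_imset -(eqP (ok2 j)).
  by apply/eqP/count_eq_in => x xA; exact: FhE.
case=> F; rewrite inE => /andP[/forallP ok1 /forallP ok2] ->.
rewrite /is_pdeal; apply/andP; split.
  apply/forallP => x; rewrite ffunE; case xA: (x \in A') => //.
  by have := ok1 (h x); rewrite hA xA h_owner.
apply/forallP => j; rewrite -(eqP (ok2 j)) count_imset.
by apply/eqP/count_eq_in => x xA; rewrite ffunE xA.
Qed.

End Relabel.

Lemma E_pdeals S (n : 'I_S -> nat) : E n = pdeals (tag : card_t n -> 'I_S) setT n.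
Proof.
apply: eq_card => f; rewrite !inE /is_pdeal; congr (_ && _).
  by apply: eq_forallb => c; rewrite inE.
by apply: eq_forallb => j; congr (_ == _); apply: eq_card => c; rewrite !inE.
Qed.

Section Recurrence.
Variables (S : nat) (n : 'I_S -> nat) (a : 'I_S).

(* The hand sizes of E(n_a + 1); all deals below are deals of its cards. *)
Definition n_inc : 'I_S -> nat := upd n a (n a).+1.
Local Notation cards := (card_t n_inc).

Lemma n_inc_a : n_inc a = (n a).+1.
Proof. by rewrite /n_inc /upd eqxx. Qed.

Lemma n_inc_neq j : j != a -> n_inc j = n j.
Proof. by rewrite /n_inc /upd => /negbTE ->. Qed.

Lemma le_n_inc j : (n j <= n_inc j)%N.
Proof. by rewrite /n_inc /upd; case: eqP => // ->. Qed.

Lemma eq_cards (y1 y2 : cards) :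
  (y1 == y2) = (tag y1 == tag y2) && (val (tagged y1) == val (tagged y2)).
Proof.
case: y1 y2 => i k [i' k'] /=; apply/eqP/andP => [e|[/eqP ei ek]].
  have ei : i = i' := congr1 tag e; subst i'; split => //.
  by rewrite (eq_from_Tagged e).
by subst i'; congr existT; apply/val_inj/eqP.
Qed.

Definition below (n' : 'I_S -> nat) : {set cards} :=
  [set c | (val (tagged c) < n' (tag c))%N].

(* Smaller hand sizes embed into n_inc, so E n' counts partial deals of
   [below n']. *)
Lemma E_below (n' : 'I_S -> nat) : (forall j, n' j <= n_inc j)%N ->
  E n' = pdeals tag (below n') n'.
Proof.
move=> le; pose h (c : card_t n') : cards :=
  Tagged (fun j => 'I_(n_inc j)) (widen_ord (le (tag c)) (tagged c)).
rewrite E_pdeals (pdeals_relabel (owner := tag) (h := h)) //; last first.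
  case=> i k [i' k'] e; have ei : i = i' := congr1 tag e.
  subst i'; congr existT; apply: val_inj.
  by have := congr1 val (eq_from_Tagged e).
congr pdeals; apply/setP => c; rewrite inE; apply/imsetP/idP.
  by case=> [[i k] _ ->] /=.
case: c => i k /= lt; exists (Tagged (fun j => 'I_(n' j)) (Ordinal lt)).
  by rewrite in_setT.
by rewrite /h /=; congr existT; exact: val_inj.
Qed.

Lemma n_lt_n_inc : (n a < n_inc a)%N.
Proof. by rewrite n_inc_a. Qed.

Definition new_card : cards := Tagged (fun j => 'I_(n_inc j)) (Ordinal n_lt_n_inc).

Lemma below_n : below n = setT :\ new_card.
Proof.
apply/setP => -[i k]; rewrite !inE eq_cards /=.
case: (eqVneq i a) => [e|ia] /=.
  subst i; have kle : (k <= n a)%N by rewrite -ltnS -n_inc_a.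
  by rewrite ltn_neqAle kle andbT.
by have : (k < n i)%N by rewrite -n_inc_neq.
Qed.

Lemma below_n_other c : tag c != a -> c \in below n.
Proof. by case: c => i k /= ia; rewrite inE /= -n_inc_neq. Qed.

(* Double counting the cards received by player a in the deals of E':
   each is a card c of another player, and the rest is a deal of the other
   cards with hand sizes n. *)
Lemma Einc_double_count :
  (n a).+1 * E n_inc = \sum_(c : cards | tag c != a) pdeals tag (setT :\ c) n.
Proof.
rewrite E_pdeals -n_inc_a -sum_received big_mkcond [RHS]big_mkcond.
apply: eq_bigr => c _; rewrite in_setT pdeals_fix ?in_setT // n_inc_a /=.
rewrite eq_sym andbT; case: ifP => // _; apply: pdeals_ext => j.
by rewrite /upd /n_inc /upd; case: eqVneq => // ->.
Qed.

(* Removing a card c of a player other than a from [below n] is the same, up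
   to swapping c with the last card of its hand, as shrinking that hand. *)
Lemma pdeals_below_swap (c : cards) m (ca : tag c != a) (hm : n (tag c) = m.+1)
    m' :
  pdeals tag (below n :\ c) m' = pdeals tag (below (upd n (tag c) m)) m'.
Proof.
case: c ca hm => i k /= ia hm.
have ltm : (m < n_inc i)%N by rewrite n_inc_neq // hm.
pose c : cards := Tagged (fun j => 'I_(n_inc j)) k.
pose c_last : cards := Tagged (fun j => 'I_(n_inc j)) (Ordinal ltm).
rewrite (pdeals_relabel (owner := tag) (h := tperm c c_last)); first last.
- by move=> y; case: tpermP => // ->.
- exact: perm_inj.
congr pdeals; apply/setP => y.
rewrite -{1}(tpermK c c_last y) mem_imset; last exact: perm_inj.
have kn : (k < m.+1)%N by rewrite -hm -(n_inc_neq ia) ltn_ord.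
case: tpermP => [->|->|yc ycl]; rewrite !inE !eq_cards /= ?eqxx /=.
- rewrite /upd eqxx hm ltnSn /= andbT.
  by rewrite ltn_neqAle -ltnS kn andbT eq_sym.
- by rewrite /upd eqxx ltnn.
move: yc ycl; case: y => i' k' /= yc ycl.
rewrite -(eq_cards (existT _ i' k') c); move/eqP: yc => /negbTE -> /=.
rewrite /upd; case: (eqVneq i' i) => [e|//]; subst i'.
move/eqP: ycl; rewrite (eq_cards (existT _ i k') c_last) eqxx /= => k'm.
by rewrite hm ltnS leq_eqVlt (negbTE k'm).
Qed.

Definition short_deals (c : cards) (k : 'I_S) : nat :=
  if (0 < n k)%N then pdeals tag (below n :\ c) (upd n k (n k).-1) else 0.

Lemma sumD1n (F : 'I_S -> nat) j : (\sum_(k | k != j) F k + F j = \sum_k F k)%N.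
Proof. by rewrite [RHS](bigD1 j) //= addnC. Qed.

(* For a card c of a player j <> a, both sides count the deals of the old
   cards minus c with one player short of one card, classified once by the
   receiver of the new card and once by the receiver of c. *)
Lemma short_deals_balance (c : cards) : tag c != a ->
  (pdeals tag (setT :\ c) n + short_deals c a = E n + Edec n (tag c))%N.
Proof.
move=> ca; have cB := below_n_other ca.
have new_in : new_card \in setT :\ c by rewrite !inE eq_cards /= [a == _]eq_sym (negbTE ca).
have drop_new : (setT :\ c) :\ new_card = below n :\ c.
  by rewrite below_n; apply/setP => x; rewrite !inE andbCA.
have -> : pdeals tag (setT :\ c) n = (\sum_(k | k != a) short_deals c k)%N.
  by rewrite (pdeals_by_receiver _ _ new_in) drop_new.
have -> : E n = (\sum_(k | k != tag c) short_deals c k)%N.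
  by rewrite (E_below le_n_inc) (pdeals_by_receiver _ _ cB).
have -> : Edec n (tag c) = short_deals c (tag c).
  rewrite /short_deals /Edec; case e: (n (tag c)) => [|m].
    by rewrite inE e in cB.
  rewrite /= (pdeals_below_swap ca e) -E_below // => j.
  rewrite /upd; case: eqVneq => [->|_]; last exact: le_n_inc.
  by apply: leq_trans (le_n_inc (tag c)); rewrite e.
by rewrite !sumD1n.
Qed.

(* Double counting the cards of other players received by player a in the
   deals counted by E. *)
Lemma sum_short_deals :
  (\sum_(c : cards | tag c != a) short_deals c a = n a * E n)%N.
Proof.
rewrite /short_deals; case: (posnP (n a)) => [->|na]; first by rewrite mul0n big1.
rewrite (E_below le_n_inc) -sum_received big_mkcond [RHS]big_mkcond.
apply: eq_bigr => c _; case: (boolP (c \in below n)) => cB.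
  by rewrite pdeals_fix // na andbT eq_sym.
by case: ifP => // ca; rewrite below_n_other in cB.
Qed.

Lemma card_hand j : #|[pred c : cards | tag c == j]| = n_inc j.
Proof.
have inj : injective (Tagged (fun j => 'I_(n_inc j)) : 'I_(n_inc j) -> cards).
  by move=> x y e; exact: eq_from_Tagged e.
rewrite -[RHS]card_ord -cardsT -(card_imset _ inj).
apply: eq_card => -[i k]; rewrite !inE /=.
apply/eqP/imsetP => [e|[x _ e]]; last exact: (congr1 tag e).
by subst i; exists k.
Qed.

Lemma sum_by_owner (F : 'I_S -> nat) :
  (\sum_(c : cards | tag c != a) F (tag c) = \sum_(j | j != a) n j * F j)%N.
Proof.
rewrite (partition_big (fun c : cards => tag c) (fun j => j != a)) //=.
apply: eq_bigr => j ja.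
rewrite (eq_bigr (fun _ => F j)); last by move=> c /andP[_ /eqP ->].
rewrite (eq_bigl (fun c => c \in [pred c : cards | tag c == j])); last first.
  by move=> c; rewrite inE; case: (eqVneq (tag c) j) => [->|]; rewrite ?andbF ?ja.
by rewrite sum_nat_const card_hand n_inc_neq.
Qed.

Lemma E_recurrence_nat :
  ((n a).+1 * E n_inc + n a * E n =
   \sum_(j | j != a) n j * E n + \sum_(j | j != a) n j * Edec n j)%N.
Proof.
rewrite Einc_double_count -sum_short_deals -big_split /=.
rewrite (eq_bigr (fun c => E n + Edec n (tag c)))%N; last first.
  by move=> c ca; exact: short_deals_balance.
rewrite (sum_by_owner (fun j => E n + Edec n j)) -big_split /=.
by apply: eq_bigr => j _; rewrite mulnDr.
Qed.

End Recurrence.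

Local Open Scope ring_scope.

Lemma E_recurrence S (n : 'I_S -> nat) (a : 'I_S) :
  ((n a).+1)%:Z * (Einc n a)%:Z =
    \sum_(j < S | j != a) (n j)%:Z * (Edec n j)%:Z
    + ((\sum_(j < S | j != a) (n j)%:Z) - (n a)%:Z) * (E n)%:Z.
Proof.
have := congr1 Posz (E_recurrence_nat n a).
rewrite !PoszD !PoszM !(big_morph Posz PoszD (erefl 0%:Z)) /Einc -/(n_inc n a).
under eq_bigr do rewrite PoszM.
under [X in _ = _ + X -> _]eq_bigr do rewrite PoszM.
move=> rec; apply/(addIr ((n a)%:Z * (E n)%:Z)).
by rewrite intS mulrDl mul1r rec mulrBl mulr_suml -addrA subrK addrC.
Qed.

Lemma sumD1z S (F : 'I_S -> int) p :
  \sum_(j < S | j != p) F j = \sum_(j < S) F j - F p.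
Proof. by rewrite [X in _ = X - _](bigD1 p) //= addrC addrK. Qed.

Theorem mainTheorem8 (S : nat) (hS : (3 <= S)%N) (n : 'I_S -> nat)
    (p1 p2 : 'I_S) (h1 : val p1 = 0%N) (h2 : val p2 = 1%N) :
  (2 * ((n p2)%:Z - (n p1)%:Z) * (E n)%:Z =
     ((n p1).+1)%:Z * (Einc n p1)%:Z + (n p1)%:Z * (Edec n p1)%:Z
     - ((n p2).+1)%:Z * (Einc n p2)%:Z - (n p2)%:Z * (Edec n p2)%:Z)
  /\
  (((n p1).+1)%:Z * (Einc n p1)%:Z =
     \sum_(j < S | j != p1) (n j)%:Z * (Edec n j)%:Z
     + ((\sum_(j < S | j != p1) (n j)%:Z) - (n p1)%:Z) * (E n)%:Z).
Proof.
split; last exact: E_recurrence.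
by rewrite (E_recurrence n p1) (E_recurrence n p2) !sumD1z; ring.
Qed.
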